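(* Let $M,N\ge1$, $\gamma>0$ and let $\lambda_x,\lambda_v,\lambda_w$ be arbitrary positive constants. For arbitrary initial data, let $\{(\hat x_i(t),\hat v_i(t))\}_{i=1}^N$ be the solution of the centralized herding system \[ \frac{d\hat x_i}{dt}=\hat v_i,\qquad \frac{d\hat v_i}{dt}=\frac{\lambda_x}{N}\sum_{j=1}^N\hat\phi_{ij}(\hat x_j-\hat x_i)+\frac{\lambda_v}{N}\sum_{j=1}^N\hat\phi_{ij}(\hat v_j-\hat v_i)-\lambda_w\hat x_i,\qquad \hat\phi_{ij}=(1+|\hat x_i-\hat x_j|^2)^{-\gamma/2}, \] with $\sum_i\hat x_i(0)=\sum_i\hat v_i(0)=0$. Then $\mathcal{E}_2(t)\to0$ as $t\to\infty$.
   Context: $|\cdot|$ is the Euclidean norm on $\mathbb{R}^M$. The centralized variables are $\hat x_i=x_i-x_c$, $\hat v_i=v_i-v_c$, the deviations from the averages $x_c=\frac1N\sum_ix_i$, $v_c=\frac1N\sum_iv_i$ of a solution $(x_i,v_i)$ of the original herding model (with arbitrary initial data $x_i(0),v_i(0)$); their sums vanish for all time. Let $X=\sum_i|\hat x_i|^2$, $V=\sum_i|\hat v_i|^2$, and \[ S_\gamma=\begin{cases}\frac1N\sum_{i,j}\big\{(1+|\hat x_i-\hat x_j|^2)^{-(\gamma-2)/2}-1\big\}, & 0<\gamma<2,\\ \frac1N\sum_{i,j}\log(1+|\hat x_i-\hat x_j|^2), & \gamma=2,\\ \frac1N\sum_{i,j}\big\{1-(1+|\hat x_i-\hat x_j|^2)^{-(\gamma-2)/2}\big\},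 & \gamma>2,\end{cases} \qquad \beta_\gamma=\begin{cases}2-\gamma,&0<\gamma<2,\\2,&\gamma=2,\\\gamma-2,&\gamma>2.\end{cases} \] The herding energy is $\mathcal{E}_2(t)=\lambda_wX(t)+V(t)+\lambda_x\beta_\gamma^{-1}S_\gamma(t)$. *)

From mathcomp Require Import all_boot all_order all_algebra.
From mathcomp Require Import all_classical all_reals all_analysis.
Set Implicit Arguments. Unset Strict Implicit. Unset Printing Implicit Defensive.
Import Order.TTheory GRing.Theory Num.Theory.
Local Open Scope ring_scope.

(* A configuration of N agents in R^M: component k of agent i at time t is
   x i k t. *)

Definition sqdist (R : realType) (N M : nat) (x : 'I_N -> 'I_M -> R -> R)
  (i j : 'I_N) (t : R) : R :=
  \sum_(k < M) (x i k t - x j k t) ^+ 2.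

Definition phi (R : realType) (N M : nat) (gamma : R)
  (x : 'I_N -> 'I_M -> R -> R) (i j : 'I_N) (t : R) : R :=
  powR (1 + sqdist x i j t) (- (gamma / 2)).

(* X(t) = sum_i |x_i(t)|^2  (also used for V with the velocities) *)
Definition sqsum (R : realType) (N M : nat) (x : 'I_N -> 'I_M -> R -> R)
  (t : R) : R :=
  \sum_(i < N) \sum_(k < M) (x i k t) ^+ 2.

Definition S_gamma (R : realType) (N M : nat) (gamma : R)
  (x : 'I_N -> 'I_M -> R -> R) (t : R) : R :=
  if gamma < 2 then
    N%:R^-1 * \sum_(i < N) \sum_(j < N)
       (powR (1 + sqdist x i j t) (- ((gamma - 2) / 2)) - 1)
  else if gamma == 2 then
    N%:R^-1 * \sum_(i < N) \sum_(j < N) ln (1 + sqdist x i j t)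
  else
    N%:R^-1 * \sum_(i < N) \sum_(j < N)
       (1 - powR (1 + sqdist x i j t) (- ((gamma - 2) / 2))).

Definition beta_gamma (R : realType) (gamma : R) : R :=
  if gamma < 2 then 2 - gamma else if gamma == 2 then 2 else gamma - 2.

Definition E2 (R : realType) (N M : nat) (gamma lx lw : R)
  (x v : 'I_N -> 'I_M -> R -> R) (t : R) : R :=
  lw * sqsum x t + sqsum v t + lx / beta_gamma gamma * S_gamma gamma x t.

(* The centred system keeps the sums of positions and of velocities at zero, since
   lw |sum_i x_i|^2 + |sum_i v_i|^2 has zero derivative, and E2 is a Lyapunov
   function: E2' = - (lv / N) sum_ij phi_ij |v_i - v_j|^2 <= 0.  Hence X stays
   bounded, the weights phi_ij stay above a constant phi_min > 0, and, the velocities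
   being centred, the dissipation dominates 2 N phi_min V.  Adding to E2 a small
   multiple eps P of the cross term P = sum_i x_i . v_i, whose derivative contributes
   - lw X + V, gives a functional L equivalent to lw X + V with
   L' <= - (eps / 2) (lw X + V) <= - k L, so L, and with it E2, decays exponentially. *)

From mathcomp Require Import all_boot all_order all_algebra.
From mathcomp Require Import all_classical all_reals all_analysis.
From mathcomp Require Import ring lra.
Import Order.TTheory GRing.Theory Num.Theory numFieldNormedType.Exports.
Local Open Scope classical_set_scope.
Local Open Scope ring_scope.

Section real_functions.
Context {R : realType}.
Implicit Types (f g : R -> R) (a b c t : R).

Lemma is_derive_add {f g a b t} : is_derive t 1 f a -> is_derive t 1 g b ->
  is_derive t 1 (fun s => f s + g s) (a + b).
Proof. exact: is_deriveD. Qed.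

Lemma is_derive_sub {f g a b t} : is_derive t 1 f a -> is_derive t 1 g b ->
  is_derive t 1 (fun s => f s - g s) (a - b).
Proof. exact: is_deriveB. Qed.

Lemma is_derive_mul {f g a b t} : is_derive t 1 f a -> is_derive t 1 g b ->
  is_derive t 1 (fun s => f s * g s) (f t * b + g t * a).
Proof. exact: is_deriveM. Qed.

Lemma is_derive_scale c {f a t} : is_derive t 1 f a ->
  is_derive t 1 (fun s => c * f s) (c * a).
Proof.
move=> fa; have := is_derive_mul (is_derive_cst c t 1) fa.
by rewrite mulr0 addr0.
Qed.

Lemma is_derive_sqr {f a t} : is_derive t 1 f a ->
  is_derive t 1 (fun s => f s ^+ 2) (2 * f t * a).
Proof.
move=> fa; have := is_derive_mul fa fa.
under eq_fun do rewrite -expr2.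
by rewrite -mulrDl -mulr2n mulr_natl.
Qed.

Lemma is_derive_sumr {n} {f : 'I_n -> R -> R} {a : 'I_n -> R} {t} :
  (forall i, is_derive t 1 (f i) (a i)) ->
  is_derive t 1 (fun s => \sum_(i < n) f i s) (\sum_(i < n) a i).
Proof.
move=> fa; have := is_derive_sum fa.
rewrite (_ : \sum_(i < n) f i = fun s => \sum_(i < n) f i s) //.
by apply/funext => s; rewrite fct_sumE.
Qed.

Lemma continuous_sumr {T : topologicalType} {n} (f : 'I_n -> T -> R) (s : T) :
  (forall i, {for s, continuous (f i)}) ->
  {for s, continuous (fun y => \sum_(i < n) f i y)}.
Proof.
move=> fc; rewrite (_ : (fun y => _) = \sum_(i < n) f i); last first.
  by apply/funext => y; rewrite fct_sumE.
apply: (big_ind (fun g : T -> R => {for s, continuous g})) => // [|g h].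
  exact: cst_continuous.
exact: continuousD.
Qed.

Lemma is_derive_within_continuous {f} {df : R -> R} {a b} :
  (forall t, a <= t <= b -> is_derive t 1 f (df t)) ->
  {within `[a, b], continuous f}.
Proof.
move=> fd; apply: derivable_within_continuous => t; rewrite in_itv /= => tab.
by case: (fd t tab).
Qed.

Lemma mean_value_le {f} {df : R -> R} {a b d} : a <= b ->
  (forall t, a < t < b -> is_derive t 1 f (df t)) ->
  (forall t, a < t < b -> df t <= d) ->
  {within `[a, b], continuous f} -> f b - f a <= d * (b - a).
Proof.
rewrite le_eqVlt => /orP[/eqP<-|ab] fd dfd fc; first by rewrite !subrr mulr0.
have [c] := MVT ab (fun t t_ab => fd t t_ab) fc.
rewrite in_itv /= => c_ab ->.
by rewrite ler_pM2r ?subr_gt0 // dfd.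
Qed.

Lemma is_derive_increment_le {f} {df : R -> R} {a b d} : a <= b ->
  (forall t, a <= t <= b -> is_derive t 1 f (df t)) ->
  (forall t, a < t < b -> df t <= d) -> f b - f a <= d * (b - a).
Proof.
move=> ab fd dfd.
apply: (mean_value_le ab _ dfd (is_derive_within_continuous fd)) => t /andP[ta tb].
by apply: fd; rewrite !ltW.
Qed.

Lemma is_derive_nonincr {f} {df : R -> R} {a b} : a <= b ->
  (forall t, a <= t <= b -> is_derive t 1 f (df t)) ->
  (forall t, a < t < b -> df t <= 0) -> f b <= f a.
Proof.
by move=> ab fd dfd; rewrite -subr_le0 -(mul0r (b - a)) (is_derive_increment_le ab fd).
Qed.

(* [L * expR (k * _)] is nonincreasing. *)
Lemma is_derive_exp_decay {L dL : R -> R} {k a t} : a <= t ->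
  (forall s, a <= s -> is_derive s 1 L (dL s)) ->
  (forall s, a < s -> dL s <= - k * L s) ->
  L t <= L a * expR (k * a) * expR (- (k * t)).
Proof.
move=> a_t Ld Ldle.
pose dG s := L s * (expR (k * s) * (k * 1)) + expR (k * s) * dL s.
have Gd s : a <= s -> is_derive s 1 (fun r => L r * expR (k * r)) (dG s).
  (* instance search supplies the derivative of [expR (k * _)] *)
  by move=> a_s; apply: is_derive_mul (Ld s a_s) _.
have : L t * expR (k * t) <= L a * expR (k * a).
  apply: (@is_derive_nonincr (fun r => L r * expR (k * r)) dG _ _ a_t).
    by move=> s /andP[a_s _]; exact: Gd.
  move=> s /andP[a_s _].
  have -> : dG s = expR (k * s) * (dL s + k * L s) by rewrite /dG; ring.
  by rewrite pmulr_rle0 ?expR_gt0 //; have := Ldle s a_s; lra.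
by rewrite -ler_pdivlMr ?expR_gt0 // -expRN.
Qed.

Lemma exp_decay_cvg0 {f : R -> R} {C k} (a : R) : 0 < k ->
  (forall t, a <= t -> 0 <= f t <= C * expR (- (k * t))) ->
  f t @[t --> +oo] --> 0.
Proof.
move=> k0 fb.
have kt : (k * t) @[t --> +oo] --> +oo by apply: gt0_cvgMry k0 _; exact: cvg_id.
have e0 : (C * expR (- (k * t))) @[t --> +oo] --> 0.
  rewrite -(mulr0 C); apply: cvgM; first exact: cvg_cst.
  exact: (cvg_comp _ _ kt (@cvgr_expR R)).
apply: (squeeze_cvgr _ (cvg_cst 0) e0); near=> t; apply: fb.
near: t; exact: nbhs_pinfty_ge (num_real a).
Unshelve. all: end_near.
Qed.

End real_functions.

Lemma mulr_sum2r {R : pzSemiRingType} {m n : nat} (c : R) (F : 'I_m -> 'I_n -> R) :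
  c * \sum_(i < m) \sum_(j < n) F i j = \sum_(i < m) \sum_(j < n) c * F i j.
Proof. by rewrite mulr_sumr; under eq_bigr do rewrite mulr_sumr. Qed.

Section double_sums.
Context {R : numFieldType} {N M : nat}.
Implicit Types (w : 'I_N -> 'I_N -> R) (a b : 'I_N -> 'I_M -> R).

Lemma sum_sym_diff_eq0 w (c : 'I_N -> R) : (forall i j, w i j = w j i) ->
  \sum_(i < N) \sum_(j < N) w i j * (c j - c i) = 0.
Proof.
move=> wC; set S := \sum_(i < N) _.
have : S + S = 0.
  rewrite {1}/S exchange_big -big_split big1 // => i _.
  by rewrite -big_split big1 // => j _ /=; rewrite [w j i]wC; ring.
by move/eqP; rewrite -mulr2n -mulr_natr mulf_eq0 pnatr_eq0 orbF => /eqP.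
Qed.

Lemma sum_sym_symmetrize w a b : (forall i j, w i j = w j i) ->
  \sum_(i < N) \sum_(j < N) w i j * \sum_(k < M) (a j k - a i k) * b i k =
  - 2^-1 * \sum_(i < N) \sum_(j < N) w i j *
             \sum_(k < M) (a i k - a j k) * (b i k - b j k).
Proof.
move=> wC; set S := \sum_(i < N) _.
have S_swap : S = \sum_(i < N) \sum_(j < N) w i j * \sum_(k < M) (a i k - a j k) * b j k.
  by rewrite /S exchange_big; apply: eq_bigr => i _; apply: eq_bigr => j _; rewrite wC.
have -> : \sum_(i < N) \sum_(j < N) w i j * \sum_(k < M) (a i k - a j k) * (b i k - b j k)
    = - (S + S).
  rewrite {2}S_swap /S -big_split -sumrN; apply: eq_bigr => i _.
  rewrite -big_split -sumrN; apply: eq_bigr => j _.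
  rewrite /= -mulrDr -mulrN -big_split -sumrN; congr (_ * _).
  by apply: eq_bigr => k _ /=; ring.
by field.
Qed.

Lemma sum_sqdiff_centered a : (forall k, \sum_(i < N) a i k = 0) ->
  \sum_(i < N) \sum_(j < N) \sum_(k < M) (a i k - a j k) ^+ 2 =
  2 * N%:R * \sum_(i < N) \sum_(k < M) a i k ^+ 2.
Proof.
move=> a0; set A := \sum_(i < N) \sum_(k < M) a i k ^+ 2.
have cross_eq0 i : \sum_(j < N) \sum_(k < M) a i k * a j k = 0.
  by rewrite exchange_big big1 // => k _; rewrite -mulr_sumr a0 mulr0.
transitivity (\sum_(i < N) (N%:R * \sum_(k < M) a i k ^+ 2 + A)).
  apply: eq_bigr => i _.
  have -> : \sum_(j < N) \sum_(k < M) (a i k - a j k) ^+ 2 =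
      \sum_(j < N) (\sum_(k < M) a i k ^+ 2 + \sum_(k < M) a j k ^+ 2)
      - 2 * \sum_(j < N) \sum_(k < M) a i k * a j k.
    rewrite mulr_sumr -sumrB; apply: eq_bigr => j _.
    by rewrite mulr_sumr -big_split -sumrB; apply: eq_bigr => k _ /=; ring.
  by rewrite cross_eq0 mulr0 subr0 big_split sumr_const card_ord mulr_natl.
by rewrite big_split /= sumr_const card_ord -mulr_sumr -/A mulr_natl -mulr_natl; ring.
Qed.

End double_sums.

Lemma weighted_young {R : realFieldType} (p d y e : R) : 0 <= p -> p <= 1 -> 0 < e ->
  p * (d * y) <= e / 2 * (p * (d * d)) + y ^+ 2 / (2 * e).
Proof.
move=> p0 p1 e0.
have sq : d * y <= e / 2 * (d * d) + y ^+ 2 / (2 * e).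
  rewrite -subr_ge0 (_ : _ - _ = (e * d - y) ^+ 2 / (2 * e)); last by field; rewrite gt_eqF.
  by rewrite divr_ge0 ?sqr_ge0 // ltW // mulr_gt0.
have y0 : 0 <= y ^+ 2 / (2 * e) by rewrite divr_ge0 ?sqr_ge0 // ltW // mulr_gt0.
have pB : p * (y ^+ 2 / (2 * e)) <= y ^+ 2 / (2 * e) by rewrite ler_piMl.
have pA : p * (e / 2 * (d * d)) = e / 2 * (p * (d * d)) by rewrite mulrCA.
have := ler_wpM2l p0 sq; rewrite mulrDr pA; lra.
Qed.

Section kernel.
Context {R : realType} (gamma : R).
Hypothesis gamma_gt0 : 0 < gamma.

Definition weight (r : R) : R := (1 + r) `^ (- (gamma / 2)).

Lemma weight_le1 (r : R) : 0 <= r -> weight r <= 1.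
Proof.
move=> r0; rewrite /weight -[X in _ <= X](powRr0 (1 + r)).
by apply: ler_powR; [lra | rewrite oppr_le0 divr_ge0 // ltW].
Qed.

Lemma weight_ge0 (r : R) : 0 <= weight r.
Proof. exact: powR_ge0. Qed.

Lemma weight_le (r B : R) : 0 <= r <= B -> weight B <= weight r.
Proof.
case/andP=> r0 rB; have g2 : 0 <= gamma / 2 by rewrite divr_ge0 // ltW.
rewrite /weight !powRN lef_pV2 ?posrE ?powR_gt0 //; try lra.
by apply: ge0_ler_powR; rewrite ?nnegrE //; lra.
Qed.

(* [S_gamma / beta_gamma] averages this primitive of [weight / 2] over pairs of
   agents. *)
Definition kernel_primitive (r : R) : R := (beta_gamma gamma)^-1 *
  (if gamma < 2 then (1 + r) `^ (- ((gamma - 2) / 2)) - 1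
   else if gamma == 2 then ln (1 + r)
   else 1 - (1 + r) `^ (- ((gamma - 2) / 2))).

Lemma kernel_primitive0 : kernel_primitive 0 = 0.
Proof. by rewrite /kernel_primitive addr0 powR1 ln1 subrr !if_same mulr0. Qed.

Lemma is_derive_kernel_primitive (r : R) : 0 <= r ->
  is_derive r 1 kernel_primitive (weight r / 2).
Proof.
move=> r0; have r1 : 0 < 1 + r by lra.
have shift (f : R -> R) (df : R) : is_derive (1 + r) 1 f df ->
    is_derive r 1 (fun s => f (1 + s)) df.
  move=> fd; have := is_derive1_comp fd
    (is_derive_add (is_derive_cst (1 : R) r 1) (is_derive_id r 1)).
  by rewrite add0r mulr1.
have pow_d p : is_derive r 1 (fun s => (1 + s) `^ p) (p * (1 + r) `^ (p - 1)).
  exact: shift _ _ (is_derive1_powR p r1).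
have exponent : - ((gamma - 2) / 2) - 1 = - (gamma / 2) by field.
rewrite /kernel_primitive /weight /beta_gamma.
case: ltgtP => [g_lt2|g_gt2|->].
- have -> : (1 + r) `^ (- (gamma / 2)) / 2 =
      (2 - gamma)^-1 * (- ((gamma - 2) / 2) * (1 + r) `^ (- ((gamma - 2) / 2) - 1) - 0).
    by rewrite exponent; field; lra.
  exact: is_derive_scale _ (is_derive_sub (pow_d _) (is_derive_cst (1 : R) r 1)).
- have -> : (1 + r) `^ (- (gamma / 2)) / 2 =
      (gamma - 2)^-1 * (0 - - ((gamma - 2) / 2) * (1 + r) `^ (- ((gamma - 2) / 2) - 1)).
    by rewrite exponent; field; lra.
  exact: is_derive_scale _ (is_derive_sub (is_derive_cst (1 : R) r 1) (pow_d _)).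
- have -> : (1 + r) `^ (- (2 / 2)) / 2 = 2^-1 * (1 + r)^-1.
    by rewrite divff ?pnatr_eq0 // powR_inv1 ?ltW // mulrC.
  exact: is_derive_scale _ (shift _ _ (is_derive1_ln r1)).
Qed.

Lemma kernel_primitive_bounds (r : R) : 0 <= r -> 0 <= kernel_primitive r <= r / 2.
Proof.
move=> r0.
have Kd (t : R) : 0 <= t <= r -> is_derive t 1 kernel_primitive (weight t / 2).
  by case/andP=> t0 _; exact: is_derive_kernel_primitive.
have NKd (t : R) : 0 <= t <= r ->
    is_derive t 1 (fun s => -1 * kernel_primitive s) (-1 * (weight t / 2)).
  by move=> tr; exact/is_derive_scale/Kd.
apply/andP; split.
- have := is_derive_increment_le r0 NKd (d := 0).
  rewrite kernel_primitive0 mulr0 subr0 mul0r mulN1r oppr_le0; apply=> t _.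
  by rewrite mulN1r oppr_le0 divr_ge0 ?weight_ge0.
- have := is_derive_increment_le r0 Kd (d := 2^-1).
  rewrite kernel_primitive0 !subr0 mulrC; apply=> t /andP[t0 _].
  by have := weight_le1 _ (ltW t0); lra.
Qed.

End kernel.

Arguments weight_le1 {R gamma} gamma_gt0 {r}.
Arguments weight_le {R gamma} gamma_gt0 {r B}.
Arguments kernel_primitive_bounds {R gamma} gamma_gt0 {r}.

Section herding.
Context {R : realType} (M N : nat) (gamma lx lv lw : R) (x v : 'I_N -> 'I_M -> R -> R).
Implicit Types (t : R) (i j : 'I_N) (k : 'I_M) (a b : 'I_N -> 'I_M -> R).
Hypotheses (N_gt0 : (0 < N)%N) (gamma_gt0 : 0 < gamma)
  (lx_gt0 : 0 < lx) (lv_gt0 : 0 < lv) (lw_gt0 : 0 < lw).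

Definition accel (i : 'I_N) (k : 'I_M) (t : R) :=
  lx / N%:R * \sum_(j < N) phi gamma x i j t * (x j k t - x i k t)
  + lv / N%:R * \sum_(j < N) phi gamma x i j t * (v j k t - v i k t) - lw * x i k t.

Hypotheses (x_deriv : forall t : R, 0 < t -> forall i k, is_derive t 1 (x i k) (v i k t))
  (v_deriv : forall t : R, 0 < t -> forall i k, is_derive t 1 (v i k) (accel i k t)).

Definition snapshot (f : 'I_N -> 'I_M -> R -> R) (t : R) (i : 'I_N) (k : 'I_M) := f i k t.

Definition dirichlet (t : R) (a b : 'I_N -> 'I_M -> R) := \sum_(i < N) \sum_(j < N)
  phi gamma x i j t * \sum_(k < M) (a i k - a j k) * (b i k - b j k).

Definition coupling (t : R) (a b : 'I_N -> 'I_M -> R) := \sum_(i < N) \sum_(j < N)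
  phi gamma x i j t * \sum_(k < M) (a j k - a i k) * b i k.

Definition cross (t : R) := \sum_(i < N) \sum_(k < M) x i k t * v i k t.

Definition potential (t : R) :=
  lx / N%:R * \sum_(i < N) \sum_(j < N) kernel_primitive gamma (sqdist x i j t).

Definition quad (t : R) := lw * sqsum x t + sqsum v t.

Lemma natN_gt0 : 0 < N%:R :> R. Proof. by rewrite ltr0n. Qed.

Lemma sqsum_ge0 (f : 'I_N -> 'I_M -> R -> R) t : 0 <= sqsum f t.
Proof. by do 2 (apply: sumr_ge0 => ? _); rewrite sqr_ge0. Qed.

Lemma quad_ge0 t : 0 <= quad t.
Proof. by rewrite addr_ge0 ?mulr_ge0 ?sqsum_ge0 ?ltW. Qed.

Lemma sqdist_ge0 i j t : 0 <= sqdist x i j t.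
Proof. by apply: sumr_ge0 => k _; rewrite sqr_ge0. Qed.

Lemma phi_sym t i j : phi gamma x i j t = phi gamma x j i t.
Proof. by rewrite /phi /sqdist; under eq_bigr do rewrite -sqrrN opprB. Qed.

Lemma phi_ge0 i j t : 0 <= phi gamma x i j t.
Proof. exact: powR_ge0. Qed.

Lemma phi_le1 i j t : phi gamma x i j t <= 1.
Proof. exact: (weight_le1 gamma_gt0 (sqdist_ge0 i j t)). Qed.

Lemma coupling_dirichlet t a b : coupling t a b = - 2^-1 * dirichlet t a b.
Proof. exact/sum_sym_symmetrize/phi_sym. Qed.

Lemma dirichlet_ge0 t a : 0 <= dirichlet t a a.
Proof.
do 2 (apply: sumr_ge0 => ? _); rewrite mulr_ge0 ?phi_ge0 //.
by apply: sumr_ge0 => k _; rewrite -expr2 sqr_ge0.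
Qed.

Lemma sum_mul_accel t b :
  \sum_(i < N) \sum_(k < M) b i k * accel i k t =
  lx / N%:R * coupling t (snapshot x t) b + lv / N%:R * coupling t (snapshot v t) b
  - lw * \sum_(i < N) \sum_(k < M) x i k t * b i k.
Proof.
have swap (c : R) (f : 'I_N -> 'I_M -> R -> R) i :
    \sum_(k < M) b i k * (c * \sum_(j < N) phi gamma x i j t * (f j k t - f i k t)) =
    c * \sum_(j < N) phi gamma x i j t * \sum_(k < M) (f j k t - f i k t) * b i k.
  transitivity (\sum_(k < M) \sum_(j < N)
      c * (phi gamma x i j t * ((f j k t - f i k t) * b i k))).
    by apply: eq_bigr => k _; rewrite !mulr_sumr; apply: eq_bigr => j _; ring.
  rewrite exchange_big mulr_sumr; apply: eq_bigr => j _.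
  by rewrite !mulr_sumr.
transitivity (\sum_(i < N)
    (lx / N%:R * \sum_(j < N) phi gamma x i j t * \sum_(k < M) (x j k t - x i k t) * b i k
   + lv / N%:R * \sum_(j < N) phi gamma x i j t * \sum_(k < M) (v j k t - v i k t) * b i k
   - lw * \sum_(k < M) x i k t * b i k)).
  apply: eq_bigr => i _; rewrite -!swap mulr_sumr -big_split -sumrB.
  by apply: eq_bigr => k _; rewrite /accel /=; ring.
by rewrite sumrB big_split /= -!mulr_sumr.
Qed.

Lemma sum_accel t k : \sum_(i < N) accel i k t = - lw * \sum_(i < N) x i k t.
Proof.
rewrite /accel sumrB big_split /= -!mulr_sumr.
rewrite !(sum_sym_diff_eq0 (fun i j => phi gamma x i j t)) => [|i j|i j]; try exact: phi_sym.
by rewrite !mulr0 !add0r mulNr.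
Qed.

Lemma E2_split t : E2 gamma lx lw x v t = quad t + potential t.
Proof.
rewrite /E2 /quad /potential /S_gamma /kernel_primitive /beta_gamma; congr (_ + _).
by rewrite -mulr_sum2r; case: ltgtP => _; ring.
Qed.

Lemma is_derive_sqsum (f : 'I_N -> 'I_M -> R -> R) (df : 'I_N -> 'I_M -> R) t :
  (forall i k, is_derive t 1 (f i k) (df i k)) ->
  is_derive t 1 (sqsum f) (2 * \sum_(i < N) \sum_(k < M) f i k t * df i k).
Proof.
move=> fd; rewrite /sqsum mulr_sum2r.
apply: is_derive_sumr => i; apply: is_derive_sumr => k.
by rewrite mulrA; exact: is_derive_sqr.
Qed.

Lemma is_derive_sqdist {t} i j : 0 < t -> is_derive t 1 (sqdist x i j)
  (2 * \sum_(k < M) (x i k t - x j k t) * (v i k t - v j k t)).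
Proof.
move=> t0; rewrite /sqdist mulr_sumr; apply: is_derive_sumr => k /=.
by rewrite mulrA; exact: is_derive_sqr (is_derive_sub (x_deriv _ t0 i k) (x_deriv _ t0 j k)).
Qed.

Lemma is_derive_potential {t} : 0 < t ->
  is_derive t 1 potential (lx / N%:R * dirichlet t (snapshot x t) (snapshot v t)).
Proof.
move=> t0; apply: is_derive_scale.
apply: is_derive_sumr => i; apply: is_derive_sumr => j /=.
apply: (is_derive_eq (is_derive1_comp
  (is_derive_kernel_primitive _ _ (sqdist_ge0 i j t)) (is_derive_sqdist i j t0))).
by rewrite /phi /weight; field.
Qed.

Lemma is_derive_quad {t} : 0 < t -> is_derive t 1 quad
  (lw * (2 * cross t) + 2 * \sum_(i < N) \sum_(k < M) v i k t * accel i k t).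
Proof.
move=> t0; exact: is_derive_add (is_derive_scale _ (is_derive_sqsum _ _ _ (x_deriv _ t0)))
  (is_derive_sqsum _ _ _ (v_deriv _ t0)).
Qed.

Lemma is_derive_E2 {t} : 0 < t -> is_derive t 1 (E2 gamma lx lw x v)
  (- (lv / N%:R) * dirichlet t (snapshot v t) (snapshot v t)).
Proof.
move=> t0; rewrite (_ : E2 _ _ _ _ _ = fun s => quad s + potential s); last first.
  by apply/funext => s; exact: E2_split.
apply: is_derive_eq (is_derive_add (is_derive_quad t0) (is_derive_potential t0)) _.
rewrite sum_mul_accel !coupling_dirichlet /cross /snapshot.
by field; rewrite pnatr_eq0 -lt0n.
Qed.

Lemma is_derive_cross {t} : 0 < t -> is_derive t 1 cross
  (- (lx / (2 * N%:R)) * dirichlet t (snapshot x t) (snapshot x t)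
   + lv / N%:R * coupling t (snapshot v t) (snapshot x t) - lw * sqsum x t + sqsum v t).
Proof.
move=> t0; apply: is_derive_eq (is_derive_sumr (fun i => is_derive_sumr (fun k =>
  is_derive_mul (x_deriv _ t0 i k) (v_deriv _ t0 i k)))) _.
under eq_bigr do rewrite big_split.
rewrite big_split /= sum_mul_accel coupling_dirichlet /sqsum /snapshot.
under [X in _ = _ + X]eq_bigr do under eq_bigr do rewrite expr2.
under [X in _ = _ - _ * X + _]eq_bigr do under eq_bigr do rewrite expr2.
by field; rewrite pnatr_eq0 -lt0n.
Qed.

Hypotheses
  (x_cont : forall i k, {within [set t : R | 0 <= t], continuous (x i k)})
  (v_cont : forall i k, {within [set t : R | 0 <= t], continuous (v i k)})
  (x_sum0 : forall k, \sum_(i < N) x i k 0 = 0)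
  (v_sum0 : forall k, \sum_(i < N) v i k 0 = 0).

Lemma sum_eq0 {t} k : 0 <= t -> \sum_(i < N) x i k t = 0 /\ \sum_(i < N) v i k t = 0.
Proof.
move=> t0; pose Q s := lw * (\sum_(i < N) x i k s) ^+ 2 + (\sum_(i < N) v i k s) ^+ 2.
have Qd s : 0 < s < t -> is_derive s 1 Q 0.
  case/andP=> s0 _; apply: is_derive_eq (is_derive_add
    (is_derive_scale _ (is_derive_sqr (is_derive_sumr (fun i => x_deriv _ s0 i k))))
    (is_derive_sqr (is_derive_sumr (fun i => v_deriv _ s0 i k)))) _.
  by rewrite sum_accel; ring.
have Qc : {within `[0, t], continuous Q}.
  pose X s := \sum_(i < N) x i k s; pose V s := \sum_(i < N) v i k s.
  have -> : Q = cst lw \* (X \* X) + V \* V by apply/funext => s; rewrite /Q /= !expr2.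
  apply: (continuous_subspaceW (B := [set s : R | 0 <= s])).
    by move=> s; rewrite /= in_itv /= => /andP[].
  have Xc : {within [set s : R | 0 <= s], continuous X}.
    by move=> s; apply: continuous_sumr => i; exact: x_cont.
  have Vc : {within [set s : R | 0 <= s], continuous V}.
    by move=> s; apply: continuous_sumr => i; exact: v_cont.
  move=> s; apply: continuousD; last exact: continuousM (Vc s) (Vc s).
  by apply: continuousM; [exact: cvg_cst | exact: continuousM (Xc s) (Xc s)].
have := mean_value_le t0 Qd (fun _ _ => lexx 0) Qc.
rewrite /Q !x_sum0 !v_sum0 expr0n mulr0 !addr0 subr0 mul0r => Qt.
have x0 : (\sum_(i < N) x i k t) ^+ 2 = 0.
  apply/eqP; rewrite eq_le sqr_ge0 andbT -(pmulr_rle0 _ lw_gt0).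
  by apply: le_trans Qt; rewrite lerDl sqr_ge0.
move: Qt; rewrite x0 mulr0 add0r => v0.
by split; apply/eqP; rewrite -sqrf_eq0 ?x0 // eq_le v0 sqr_ge0.
Qed.

Lemma sqdist_le_sqsum t i j : sqdist x i j t <= 4 * sqsum x t.
Proof.
have term_le l : \sum_(k < M) x l k t ^+ 2 <= sqsum x t.
  by rewrite /sqsum (bigD1 l) //= lerDl; do 2 (apply: sumr_ge0 => ? _); rewrite sqr_ge0.
have : sqdist x i j t <= 2 * \sum_(k < M) x i k t ^+ 2 + 2 * \sum_(k < M) x j k t ^+ 2.
  rewrite !mulr_sumr -big_split; apply: ler_sum => k _ /=.
  by have := sqr_ge0 (x i k t + x j k t); nra.
by have := term_le i; have := term_le j; lra.
Qed.

Lemma potential_bounds t : 0 <= potential t <= 2 * lx * N%:R * sqsum x t.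
Proof.
have K_bounds i j : 0 <= kernel_primitive gamma (sqdist x i j t) <= 2 * sqsum x t.
  have /andP[K0 K1] := kernel_primitive_bounds gamma_gt0 (sqdist_ge0 i j t).
  by rewrite K0 /=; have := sqdist_le_sqsum t i j; lra.
have N0 := natN_gt0; rewrite /potential; apply/andP; split.
  apply: mulr_ge0; first by rewrite divr_ge0 ?ltW.
  apply: sumr_ge0 => i _; apply: sumr_ge0 => j _.
  by case/andP: (K_bounds i j).
have -> : 2 * lx * N%:R * sqsum x t =
    lx / N%:R * \sum_(i < N) \sum_(j < N) 2 * sqsum x t.
  rewrite !sumr_const !card_ord -[in RHS]mulr_natl -[in RHS]mulr_natl.
  by field; rewrite pnatr_eq0 -lt0n.
apply: ler_wpM2l; first by rewrite divr_ge0 ?ltW.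
apply: ler_sum => i _; apply: ler_sum => j _.
by case/andP: (K_bounds i j).
Qed.

Lemma cross_le t : `|cross t| <= (sqsum x t + sqsum v t) / 2.
Proof.
have -> : (sqsum x t + sqsum v t) / 2 =
    \sum_(i < N) \sum_(k < M) 2^-1 * (x i k t ^+ 2 + v i k t ^+ 2).
  rewrite -mulr_sum2r [LHS]mulrC; congr (_ * _).
  by rewrite /sqsum -big_split; apply: eq_bigr => i _; rewrite -big_split.
apply: le_trans (ler_norm_sum _ _ _) _; apply: ler_sum => i _.
apply: le_trans (ler_norm_sum _ _ _) _; apply: ler_sum => k _.
rewrite ler_norml; apply/andP; split.
- by have := sqr_ge0 (x i k t + v i k t); nra.
- by have := sqr_ge0 (x i k t - v i k t); nra.
Qed.

Definition c_E2 := 1 + 2 * lx * N%:R / lw.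

Lemma quad_le_E2 t : quad t <= E2 gamma lx lw x v t.
Proof. by rewrite E2_split lerDl; case/andP: (potential_bounds t). Qed.

Lemma E2_le_quad t : E2 gamma lx lw x v t <= c_E2 * quad t.
Proof.
rewrite E2_split /c_E2 mulrDl mul1r lerD2l.
case/andP: (potential_bounds t) => _ /le_trans; apply.
have -> : 2 * lx * N%:R * sqsum x t = 2 * lx * N%:R / lw * (lw * sqsum x t).
  by field; rewrite gt_eqF.
apply: ler_wpM2l; first by rewrite divr_ge0 ?mulr_ge0 ?ltW ?natN_gt0.
by rewrite /quad lerDl sqsum_ge0.
Qed.

Lemma E2_ge0 t : 0 <= E2 gamma lx lw x v t.
Proof. exact: le_trans (quad_ge0 t) (quad_le_E2 t). Qed.

Lemma E2_le_E2_1 {t} : 1 <= t -> E2 gamma lx lw x v t <= E2 gamma lx lw x v 1.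
Proof.
move=> t1; apply: (is_derive_nonincr (df := fun s =>
  - (lv / N%:R) * dirichlet s (snapshot v s) (snapshot v s)) t1) => [s /andP[s1 _]|s _].
  by apply: is_derive_E2; lra.
by rewrite mulNr oppr_le0 mulr_ge0 ?dirichlet_ge0 // divr_ge0 ?ltW ?natN_gt0.
Qed.

(* For [t >= 1], [sqdist <= 4 X <= 4 E2 t / lw <= 4 E2 1 / lw]. *)
Definition phi_min := weight gamma (4 * (E2 gamma lx lw x v 1 / lw)).

Lemma phi_min_gt0 : 0 < phi_min.
Proof.
apply: powR_gt0; have := E2_ge0 1.
have : 0 <= E2 gamma lx lw x v 1 / lw by rewrite divr_ge0 ?E2_ge0 ?ltW.
lra.
Qed.

Lemma phi_ge_min {t} i j : 1 <= t -> phi_min <= phi gamma x i j t.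
Proof.
move=> t1; change (phi_min <= weight gamma (sqdist x i j t)).
apply: (weight_le gamma_gt0); rewrite sqdist_ge0 /=.
apply: le_trans (sqdist_le_sqsum t i j) _; rewrite ler_pM2l // ler_pdivlMr //.
apply: le_trans _ (E2_le_E2_1 t1); apply: le_trans _ (quad_le_E2 t).
by rewrite /quad mulrC lerDl sqsum_ge0.
Qed.

Lemma dirichlet_ge_sqsum {t} : 1 <= t ->
  2 * N%:R * phi_min * sqsum v t <= dirichlet t (snapshot v t) (snapshot v t).
Proof.
move=> t1; have centered k : \sum_(i < N) snapshot v t i k = 0.
  by case: (sum_eq0 k (le_trans ler01 t1)).
rewrite [_ * phi_min]mulrC -mulrA /sqsum -(sum_sqdiff_centered _ centered) mulr_sum2r.
apply: ler_sum => i _; apply: ler_sum => j _.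
apply: ler_pM; [exact: ltW phi_min_gt0 | by apply: sumr_ge0 => k _; rewrite sqr_ge0 |
  exact: phi_ge_min | by under eq_bigr do rewrite expr2].
Qed.

Lemma coupling_le t {d : R} : 0 < d ->
  coupling t (snapshot v t) (snapshot x t) <=
  d / 2 * dirichlet t (snapshot v t) (snapshot v t) + N%:R * sqsum x t / (2 * d).
Proof.
move=> d0.
have -> : N%:R * sqsum x t / (2 * d) =
    \sum_(i < N) \sum_(j < N) (2 * d)^-1 * \sum_(k < M) x i k t ^+ 2.
  rewrite [RHS](eq_bigr (fun i => N%:R * ((2 * d)^-1 * \sum_(k < M) x i k t ^+ 2)));
    last by move=> i _; rewrite sumr_const card_ord (mulr_natl _ N).
  by rewrite -!mulr_sumr /sqsum; field; rewrite gt_eqF.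
rewrite /dirichlet mulr_sum2r -big_split; apply: ler_sum => i _.
rewrite -big_split; apply: ler_sum => j _ /=.
rewrite !mulr_sumr -big_split; apply: ler_sum => k _ /=.
have := weighted_young _ (v j k t - v i k t) (x i k t) d (phi_ge0 i j t) (phi_le1 i j t) d0.
by rewrite /snapshot -mulrA (mulrC (2 * d)^-1); congr (_ <= _ + _); ring.
Qed.

(* Small enough for the dissipation of [V] to absorb the coupling term in the
   derivative of [cross], and for [lyapunov] to stay comparable with [quad]. *)
Definition eps := Num.min (Num.min (lw / lv) (lv * phi_min / 2)) (Num.min lw 1).

Lemma eps_bounds :
  [/\ 0 < eps, eps <= lw / lv, 2 * eps <= lv * phi_min, eps <= lw & eps <= 1].
Proof.
have := lexx eps; rewrite {2}/eps !le_min => /andP[/andP[e1 e2] /andP[e3 e4]].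
split=> //; last by rewrite mulrC -ler_pdivlMr.
by rewrite /eps !lt_min ?divr_gt0 ?mulr_gt0 ?phi_min_gt0 ?lw_gt0 ?ltr01.
Qed.

Definition lyapunov t := E2 gamma lx lw x v t + eps * cross t.

Definition dlyapunov t := - (lv / N%:R) * dirichlet t (snapshot v t) (snapshot v t)
  + eps * (- (lx / (2 * N%:R)) * dirichlet t (snapshot x t) (snapshot x t)
   + lv / N%:R * coupling t (snapshot v t) (snapshot x t) - lw * sqsum x t + sqsum v t).

Lemma is_derive_lyapunov {t} : 0 < t -> is_derive t 1 lyapunov (dlyapunov t).
Proof.
move=> t0.
exact: is_derive_add (is_derive_E2 t0) (is_derive_scale _ (is_derive_cross t0)).
Qed.

Lemma eps_cross_le t : `|eps * cross t| <= quad t / 2.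
Proof.
have [e0 _ _ e_lw e1] := eps_bounds.
rewrite normrM gtr0_norm //; apply: le_trans (ler_wpM2l (ltW e0) (cross_le t)) _.
have := ler_wpM2r (sqsum_ge0 x t) e_lw; have := ler_wpM2r (sqsum_ge0 v t) e1.
rewrite /quad mul1r; lra.
Qed.

Lemma quad_le_lyapunov t : quad t / 2 <= lyapunov t.
Proof.
have := quad_le_E2 t; have := eps_cross_le t; rewrite ler_norml /lyapunov; lra.
Qed.

Lemma lyapunov_le_quad t : lyapunov t <= (c_E2 + 2^-1) * quad t.
Proof.
have := E2_le_quad t; have := eps_cross_le t; rewrite ler_norml /lyapunov; lra.
Qed.

Lemma dlyapunov_le {t} : 1 <= t -> dlyapunov t <= - (eps / 2) * quad t.
Proof.
move=> t1; have [e0 e_lwlv e_phi _ _] := eps_bounds; have N0 := natN_gt0.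
set X := sqsum x t; set V := sqsum v t.
set a := dirichlet t (snapshot v t) (snapshot v t).
set A := coupling t (snapshot v t) (snapshot x t).
set c := lv / N%:R; have c0 : 0 < c by rewrite divr_gt0.
have a0 : 0 <= c / 2 * a by rewrite mulr_ge0 ?dirichlet_ge0 // divr_ge0 ?ltW.
have Dx0 : 0 <= eps * (lx / (2 * N%:R) * dirichlet t (snapshot x t) (snapshot x t)).
  apply: mulr_ge0; first exact: ltW.
  by apply: mulr_ge0; [rewrite divr_ge0 // ltW // mulr_gt0 | exact: dirichlet_ge0].
have epsA : eps * (c * A) <= eps * (lv / lw) * (c / 2 * a) + eps * lw / 2 * X.
  have -> : eps * (lv / lw) * (c / 2 * a) + eps * lw / 2 * X =
      eps * c * (lv / lw / 2 * a + N%:R * X / (2 * (lv / lw))).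
    by rewrite /c; field; rewrite !gt_eqF.
  rewrite [X in X <= _]mulrA; apply: ler_wpM2l; first by rewrite mulr_ge0 ?ltW.
  exact: coupling_le (divr_gt0 lv_gt0 lw_gt0).
have delta_a : eps * (lv / lw) * (c / 2 * a) <= c / 2 * a.
  by apply: ler_piMl => //; rewrite -ler_pdivlMr ?divr_gt0 // mul1r invf_div.
have Va : 2 * eps * V <= c / 2 * a.
  apply: le_trans (_ : lv * phi_min * V <= _).
    by apply: ler_wpM2r; first exact: sqsum_ge0.
  have -> : lv * phi_min * V = c / 2 * (2 * N%:R * phi_min * V).
    by rewrite /c; field; rewrite gt_eqF.
  by apply: ler_wpM2l; [rewrite divr_ge0 ?ltW | exact: dirichlet_ge_sqsum].
rewrite /dlyapunov /quad -/X -/V -/a -/A -/c.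
have := mulr_ge0 (ltW e0) (sqsum_ge0 v t); rewrite -/V.
lra.
Qed.

Lemma c_E2_ge1 : 1 <= c_E2.
Proof. by rewrite lerDl !mulr_ge0 ?invr_ge0 ?ltW ?natN_gt0. Qed.

Lemma E2_cvg0 : E2 gamma lx lw x v t @[t --> +oo] --> 0.
Proof.
have [e0 _ _ _ _] := eps_bounds; have c1 := c_E2_ge1.
pose k := eps / (2 * (c_E2 + 2^-1)).
have k0 : 0 < k by rewrite divr_gt0 // mulr_gt0 //; lra.
have decay t : 1 <= t -> lyapunov t <= lyapunov 1 * expR (k * 1) * expR (- (k * t)).
  move=> t1; apply: (is_derive_exp_decay (dL := dlyapunov) t1) => [s s1|s s1].
    by apply: is_derive_lyapunov; lra.
  apply: le_trans (dlyapunov_le (ltW s1)) _.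
  have := ler_wpM2l (ltW k0) (lyapunov_le_quad s).
  have -> : k * ((c_E2 + 2^-1) * quad s) = eps / 2 * quad s by rewrite /k; field; lra.
  lra.
apply: (exp_decay_cvg0 (C := 2 * c_E2 * (lyapunov 1 * expR (k * 1))) 1 k0) => t t1.
rewrite E2_ge0 /=.
have : quad t <= 2 * (lyapunov 1 * expR (k * 1) * expR (- (k * t))).
  by have := decay t t1; have := quad_le_lyapunov t; lra.
move/(ler_wpM2l (le_trans ler01 c1)); have := E2_le_quad t; lra.
Qed.

End herding.

Theorem theorem3p6 (R : realType) (M N : nat) (hM : (0 < M)%N) (hN : (0 < N)%N)
  (gamma lx lv lw : R) (hgamma : 0 < gamma) (hlx : 0 < lx) (hlv : 0 < lv)
  (hlw : 0 < lw)
  (x v : 'I_N -> 'I_M -> R -> R)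
  (hxc : forall i k, {within [set t : R | 0 <= t], continuous (x i k : R -> R)})
  (hvc : forall i k, {within [set t : R | 0 <= t], continuous (v i k : R -> R)})
  (hx : forall t : R, 0 < t -> forall i k, is_derive t 1 (x i k) (v i k t))
  (hv : forall t : R, 0 < t -> forall i k,
     is_derive t 1 (v i k)
       (lx / N%:R * \sum_(j < N) phi gamma x i j t * (x j k t - x i k t)
        + lv / N%:R * \sum_(j < N) phi gamma x i j t * (v j k t - v i k t)
        - lw * x i k t))
  (hx0 : forall k, \sum_(i < N) x i k 0 = 0)
  (hv0 : forall k, \sum_(i < N) v i k 0 = 0) :
  E2 gamma lx lw x v t @[t --> +oo] --> 0.
Proof. exact: E2_cvg0. Qed.
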